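(* Let $\pi\in\mathcal{S}_n$, let $s$ be the position with $\pi_s=1$, let $\mathsf{D}(\pi)=\{i\in\{1,\dots,n-1\}:\pi_i>\pi_{i+1}\}$ be the descent set of $\pi$ and $d=|\mathsf{D}(\pi)|$. Then $\pi$ avoids each of the patterns $1243$, $2143$ and $231$ if and only if one of the following holds: (i) $s>d$ and $\mathsf{D}(\pi)=\{1,2,\dots,d\}$; (ii) $s\le d$, $\mathsf{D}(\pi)=\{1,2,\dots,s-1,s+1,s+2,\dots,d+1\}$, and $\pi_{s-1}>\pi_{s+1}$ if $1<s<n$.
   Context: A permutation $\pi\in\mathcal{S}_n$ avoids $\tau\in\mathcal{S}_k$ if there are no indices $i_1<\dots<i_k$ with $\pi_{i_1}\cdots\pi_{i_k}$ in the same relative order as $\tau_1\cdots\tau_k$. *)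

From mathcomp Require Import all_boot all_fingroup.
Set Implicit Arguments. Unset Strict Implicit. Unset Printing Implicit Defensive.

(* Convention: pi : 'S_n is a permutation of 'I_n = {0,..,n-1}; its
   one-line word in 1-based notation is  oneline pi i = pi_i  for 1 <= i <= n,
   with values in {1,..,n}:  pi_i := (pi (i-1)) + 1.  Outside 1..n it is 0. *)
Definition oneline {n} (pi : 'S_n) (i : nat) : nat :=
  if @insub nat (fun k => k < n) _ i.-1 is Some j then (pi j).+1 else 0.

(* A pattern tau in S_k is given by its one-line word (a seq nat of length k,
   e.g. [:: 1; 2; 4; 3]).  pi contains tau if there are indices
   i_1 < ... < i_k (0-based here) with pi_{i_1}..pi_{i_k} order-isomorphic to tau. *)
Definition contains {n} (pi : 'S_n) (tau : seq nat) : Prop :=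
  exists f : 'I_(size tau) -> 'I_n,
    (forall a b : 'I_(size tau), a < b -> f a < f b) /\
    (forall a b : 'I_(size tau),
        (pi (f a) < pi (f b)) = (nth 0 tau a < nth 0 tau b)).

Definition avoids {n} (pi : 'S_n) (tau : seq nat) : Prop := ~ contains pi tau.

Definition descents {n} (pi : 'S_n) : seq nat :=
  [seq i <- iota 1 n.-1 | oneline pi i.+1 < oneline pi i].

From mathcomp Require Import all_boot all_fingroup zify.
Set Implicit Arguments. Unset Strict Implicit. Unset Printing Implicit Defensive.

(* Avoiding 231 forces the letters before 1 to decrease.  After the 1, a rise followed by a fall is
   a 1243 headed by the letter 1, or a 231; so the letters after 1 fall down to
   a valley and rise afterwards.  When they start with a fall, 2143 and 231
   force pi_(s+1) < pi_(s-1).  Conversely, in a word of this shape every rise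
   ending before the valley starts at the letter 1, whereas a 231 contains a
   rise not starting at 1, and a 1243 or a 2143 contains two rises ending at
   the same letter, all of them ending before the valley.  The descent set of
   such a word is {1, .., e} minus {s}, where e + 1 is the position of the
   valley: this is case (i) when e = s and case (ii) with e = d + 1 otherwise. *)

(* Indices are 0-based: [letter pi i] is pi_(i+1), and [descent pi i] says
   that i + 1 is in D(pi). *)
Definition letter n (pi : 'S_n) (i : nat) : nat := oneline pi i.+1.

Definition descent n (pi : 'S_n) (i : nat) : bool :=
  (i.+1 < n) && (letter pi i.+1 < letter pi i).

Section Letters.

Variables (n : nat) (pi : 'S_n).

Lemma letterE (j : 'I_n) : letter pi j = (pi j).+1.
Proof. by rewrite /letter /oneline /= insubT //= => lt_j_n; congr (pi _).+1; apply: val_inj. Qed.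

Lemma letter_gt0 i : i < n -> 0 < letter pi i.
Proof. by move=> lt_i_n; rewrite (letterE (Ordinal lt_i_n)). Qed.

Lemma letter_inj i j : i < n -> j < n -> letter pi i = letter pi j -> i = j.
Proof.
move=> lt_i_n lt_j_n; rewrite (letterE (Ordinal lt_i_n)) (letterE (Ordinal lt_j_n)).
by move=> /succn_inj /val_inj /perm_inj /(congr1 val).
Qed.

Lemma letter_ltgt i j : i < n -> j < n -> i != j ->
  (letter pi i < letter pi j) || (letter pi j < letter pi i).
Proof.
by move=> lt_i_n lt_j_n /eqP neq_ij; rewrite -neq_ltn; apply/eqP => /(letter_inj lt_i_n lt_j_n).
Qed.

Lemma ltn_letterS i : i.+1 < n -> (letter pi i < letter pi i.+1) = ~~ descent pi i.
Proof.
move=> lt_i1_n; rewrite /descent lt_i1_n /=.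
have : letter pi i != letter pi i.+1.
  by apply/eqP => /(letter_inj (ltnW lt_i1_n) lt_i1_n); lia.
lia.
Qed.

Lemma containsP tau : contains pi tau <-> exists q : nat -> nat,
  [/\ forall a, a < size tau -> q a < n,
      forall a b, a < b -> b < size tau -> q a < q b &
      forall a b, a < size tau -> b < size tau ->
        (letter pi (q a) < letter pi (q b)) = (nth 0 tau a < nth 0 tau b)].
Proof.
split=> [[f [f_incr f_order]] | [q [q_lt_n q_incr q_order]]].
  pose q a := if insub a is Some a' then val (f a') else 0.
  have qE a (lt_a : a < size tau) : q a = f (Ordinal lt_a).
    by rewrite /q insubT /=; congr (nat_of_ord (f _)); apply: val_inj.
  exists q; split=> [a lt_a | a b lt_ab lt_b | a b lt_a lt_b].
  - by rewrite qE.
  - by rewrite !(qE _ (ltn_trans lt_ab lt_b)) (qE _ lt_b); apply: (f_incr (Ordinal _)).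
  - by rewrite (qE _ lt_a) (qE _ lt_b) !letterE ltnS; apply: (f_order (Ordinal _)).
exists (fun a : 'I_(size tau) => Ordinal (q_lt_n a (ltn_ord a))); split=> a b.
  by move=> lt_ab /=; apply: q_incr lt_ab (ltn_ord b).
rewrite -q_order // (letterE (Ordinal (q_lt_n a (ltn_ord a)))).
by rewrite (letterE (Ordinal (q_lt_n b (ltn_ord b)))).
Qed.

Lemma contains231P : contains pi [:: 2; 3; 1] <->
  exists x y z, [/\ x < y < z, z < n & letter pi z < letter pi x < letter pi y].
Proof.
split=> [/containsP [q [q_lt_n q_incr q_order]] | [x [y [z [? ? ?]]]]].
  exists (q 0), (q 1), (q 2); by rewrite !q_incr ?q_lt_n ?q_order.
apply/containsP; exists (nth 0 [:: x; y; z]); split.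
- by move=> [|[|[|a]]] //= _; lia.
- by move=> [|[|[|a]]] [|[|[|b]]] //= _ _; lia.
- by move=> [|[|[|a]]] [|[|[|b]]] //= _ _; lia.
Qed.

Lemma contains1243P : contains pi [:: 1; 2; 4; 3] <->
  exists w x y z, [/\ w < x < y, y < z < n, letter pi w < letter pi x
                    & letter pi x < letter pi z < letter pi y].
Proof.
split=> [/containsP [q [q_lt_n q_incr q_order]] | [w [x [y [z [? ? ? ?]]]]]].
  exists (q 0), (q 1), (q 2), (q 3); by rewrite !q_incr ?q_lt_n ?q_order.
apply/containsP; exists (nth 0 [:: w; x; y; z]); split.
- by move=> [|[|[|[|a]]]] //= _; lia.
- by move=> [|[|[|[|a]]]] [|[|[|[|b]]]] //= _ _; lia.
- by move=> [|[|[|[|a]]]] [|[|[|[|b]]]] //= _ _; lia.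
Qed.

Lemma contains2143P : contains pi [:: 2; 1; 4; 3] <->
  exists w x y z, [/\ w < x < y, y < z < n, letter pi x < letter pi w
                    & letter pi w < letter pi z < letter pi y].
Proof.
split=> [/containsP [q [q_lt_n q_incr q_order]] | [w [x [y [z [? ? ? ?]]]]]].
  exists (q 0), (q 1), (q 2), (q 3); by rewrite !q_incr ?q_lt_n ?q_order.
apply/containsP; exists (nth 0 [:: w; x; y; z]); split.
- by move=> [|[|[|[|a]]]] //= _; lia.
- by move=> [|[|[|[|a]]]] [|[|[|[|b]]]] //= _ _; lia.
- by move=> [|[|[|[|a]]]] [|[|[|[|b]]]] //= _ _; lia.
Qed.

End Letters.

Lemma down_closed_ltn (P : pred nat) k :
  ~~ P k -> (forall i, P i.+1 -> P i) -> exists m, forall i, P i = (i < m).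
Proof.
move=> notPk P_down; have exNP : exists k, ~~ P k by exists k.
case: (ex_minnP exNP) => m notPm m_min; exists m => i.
case: ltnP => [lt_im | le_mi]; first by apply: contraTT lt_im => /m_min; rewrite -leqNgt.
rewrite -(subnKC le_mi); elim: (i - m) => [|j IHj]; first by rewrite addn0 (negbTE notPm).
by rewrite addnS; apply: contraFF IHj => /P_down.
Qed.

Lemma homo_ltn_segment (T : Type) (f : nat -> T) (r : rel T) a b :
  transitive r -> a < b -> (forall i, a <= i < b -> r (f i) (f i.+1)) -> r (f a) (f b).
Proof.
move=> r_trans; elim: b => // b IHb; rewrite ltnS leq_eqVlt => /orP[/eqP <- | lt_ab] f_step.
  by apply: f_step; rewrite leqnn ltnSn.
apply: (r_trans (f b)); last by apply: f_step; rewrite ltnSn (ltnW lt_ab).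
by apply: IHb lt_ab _ => i /andP[le_ai lt_ib]; apply: f_step; rewrite le_ai ltnS ltnW.
Qed.

Section Descents.

Variables (n : nat) (pi : 'S_n).

Lemma mem_descents i : (i.+1 \in descents pi) = descent pi i.
Proof. by rewrite /descents mem_filter mem_iota /descent andbC; congr (_ && _); lia. Qed.

Lemma descents0 : (0 \in descents pi) = false.
Proof. by rewrite /descents mem_filter mem_iota andbF. Qed.

Lemma descentsP e x :
  (forall i, descent pi i = (i < e) && (i != x)) <->
  descents pi =i [seq i <- iota 1 e | i != x.+1].
Proof.
split=> [descentE [|i] | eqD i]; first by rewrite descents0 mem_filter mem_iota.
  by rewrite mem_descents descentE mem_filter mem_iota eqSS; lia.
by rewrite -mem_descents eqD mem_filter mem_iota eqSS; lia.
Qed.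

Lemma size_descents e x : 1 <= x <= e ->
  descents pi =i [seq i <- iota 1 e | i != x] -> size (descents pi) = e.-1.
Proof.
move=> x_in eqD; rewrite -(size_iota 1 e) -(size_rem (x := x)) ?mem_iota; last by lia.
rewrite rem_filter ?iota_uniq //.
by apply/perm_size/uniq_perm; rewrite ?filter_uniq ?iota_uniq.
Qed.

End Descents.

(* The word falls to its letter 1 at position s0 = s - 1, falls again from position
   s0 + 1 to e and rises from e on; a nonempty second fall starts below the
   letter preceding 1. *)
Definition valley_shape n (pi : 'S_n) (s0 e : nat) :=
  [/\ s0 < e, forall i, descent pi i = (i < e) && (i != s0)
    & s0.+1 < e -> 0 < s0 -> letter pi s0.+1 < letter pi s0.-1].

Section Valley.

Variables (n : nat) (pi : 'S_n) (s0 : nat).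
Hypotheses (lt_s0_n : s0 < n) (letter_s0 : letter pi s0 = 1).

Lemma letter_gt1 i : i < n -> i != s0 -> 1 < letter pi i.
Proof.
move=> lt_i_n neq_is0; have := letter_gt0 pi lt_i_n.
suff : letter pi i != 1 by lia.
by rewrite -letter_s0; apply: contra neq_is0 => /eqP /(letter_inj lt_i_n lt_s0_n) ->.
Qed.

Lemma descent_min : descent pi s0 = false.
Proof. by rewrite /descent letter_s0; apply/negbTE/andP => -[/(letter_gt0 pi)]; lia. Qed.

Lemma descent_pred_min : 0 < s0 -> descent pi s0.-1.
Proof.
move=> s0_gt0; rewrite /descent prednK // lt_s0_n letter_s0 letter_gt1 //; lia.
Qed.

Lemma avoid231_descent_before_min i : avoids pi [:: 2; 3; 1] -> i < s0 -> descent pi i.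
Proof.
move=> av231 lt_is0; have lt_i1_n : i.+1 < n by lia.
have [eq_i1s0 | neq_i1s0] := eqVneq i.+1 s0.
  by rewrite /descent lt_i1_n eq_i1s0 letter_s0 letter_gt1 //; lia.
rewrite -[descent _ _]negbK -ltn_letterS //; apply/negP => rise; apply: av231.
apply/contains231P; exists i, i.+1, s0; rewrite letter_s0 letter_gt1; [split|lia|lia]; lia.
Qed.

Lemma avoid_descent_after_min i :
  avoids pi [:: 1; 2; 4; 3] -> avoids pi [:: 2; 3; 1] ->
  s0 < i -> descent pi i.+1 -> descent pi i.
Proof.
move=> av1243 av231 lt_s0i /andP[lt_i2_n fall].
rewrite -[descent _ _]negbK -ltn_letterS ?(ltnW lt_i2_n) //; apply/negP => rise.
have /orP[lt_i_i2 | lt_i2_i] : (letter pi i < letter pi i.+2) || (letter pi i.+2 < letter pi i).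
  by apply: letter_ltgt; lia.
- apply: av1243; apply/contains1243P; exists s0, i, i.+1, i.+2.
  by rewrite letter_s0 letter_gt1; [split|lia|lia]; lia.
- by apply: av231; apply/contains231P; exists i, i.+1, i.+2; split; lia.
Qed.

Lemma avoid_fall_across_min :
  avoids pi [:: 2; 1; 4; 3] -> avoids pi [:: 2; 3; 1] ->
  0 < s0 -> descent pi s0.+1 -> letter pi s0.+1 < letter pi s0.-1.
Proof.
move=> av2143 av231 s0_gt0 /andP[lt_s2_n fall].
have /orP[// | lt_p_s1] :
    (letter pi s0.+1 < letter pi s0.-1) || (letter pi s0.-1 < letter pi s0.+1).
  by apply: letter_ltgt; lia.
have /orP[lt_p_s2 | lt_s2_p] :
    (letter pi s0.-1 < letter pi s0.+2) || (letter pi s0.+2 < letter pi s0.-1).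
  by apply: letter_ltgt; lia.
- exfalso; apply: av2143; apply/contains2143P; exists s0.-1, s0, s0.+1, s0.+2.
  by rewrite letter_s0 letter_gt1; [split|lia|lia]; lia.
- by exfalso; apply: av231; apply/contains231P; exists s0.-1, s0.+1, s0.+2; split; lia.
Qed.

Lemma avoid_valley_shape :
  avoids pi [:: 1; 2; 4; 3] -> avoids pi [:: 2; 1; 4; 3] -> avoids pi [:: 2; 3; 1] ->
  exists e, valley_shape pi s0 e.
Proof.
move=> av1243 av2143 av231.
have [m descent_afterE] : exists m, forall i, descent pi (s0.+1 + i) = (i < m).
  apply: (@down_closed_ltn (fun i => descent pi (s0.+1 + i)) n) => [|i] /=.
    by apply/negP => /andP[]; lia.
  by rewrite addnS; apply: avoid_descent_after_min => //; lia.
exists (s0.+1 + m); split=> [|i|lt_s1e s0_gt0]; first by lia.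
- case: (ltngtP i s0) => [lt_is0 | lt_s0i | ->]; last by rewrite descent_min andbF.
    by rewrite andbT avoid231_descent_before_min //; apply/esym; lia.
  by rewrite andbT -(subnKC lt_s0i) descent_afterE ltn_add2l.
- by apply: avoid_fall_across_min => //; rewrite -[s0.+1]addn0 descent_afterE; lia.
Qed.

Section ValleyShape.

Variable e : nat.
Hypotheses (lt_s0_e : s0 < e) (descentE : forall i, descent pi i = (i < e) && (i != s0))
  (fall_across_min : s0.+1 < e -> 0 < s0 -> letter pi s0.+1 < letter pi s0.-1).

Lemma valley_fall i j : i < j <= e -> (j <= s0) || (s0 < i) -> letter pi j < letter pi i.
Proof.
move=> /andP[lt_ij le_je] away.
apply: (homo_ltn_segment (r := fun x y => y < x)) lt_ij _ => [y x z | k /andP[le_ik lt_kj]].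
  by move=> lt_yx lt_zy; apply: ltn_trans lt_zy lt_yx.
have : descent pi k by rewrite descentE; apply/andP; split; lia.
by case/andP.
Qed.

Lemma valley_rise i j : e <= i < j -> j < n -> letter pi i < letter pi j.
Proof.
move=> /andP[le_ei lt_ij] lt_j_n.
apply: (homo_ltn_segment (r := fun x y => x < y)) lt_ij _ => [y x z|k /andP[le_ik lt_kj]].
  exact: ltn_trans.
by rewrite ltn_letterS ?descentE; lia.
Qed.

Lemma valley_inversion y z : y < z < n -> letter pi z < letter pi y -> y < e.
Proof.
move=> /andP[lt_yz lt_z_n] lt_zy; rewrite ltnNge; apply/negP => le_ey.
by have := @valley_rise y z; rewrite le_ey lt_yz => /(_ isT lt_z_n); lia.
Qed.

Lemma valley_rise_from_min x y : x < y < e -> letter pi x < letter pi y -> x = s0.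
Proof.
move=> /andP[lt_xy lt_ye] rise; apply/eqP; apply: contraTT rise => neq_xs0.
rewrite -leqNgt; apply/ltnW.
have [le_ys0 | lt_s0y] := leqP y s0; first by apply: valley_fall; rewrite ?lt_xy ?le_ys0 //; lia.
have [lt_s0x | le_xs0] := ltnP s0 x; first by apply: valley_fall; rewrite ?lt_xy ?lt_s0x //; lia.
have fall_y : letter pi y <= letter pi s0.+1.
  by have [-> // | ?] := eqVneq y s0.+1; apply/ltnW/valley_fall; lia.
have fall_x : letter pi s0.-1 <= letter pi x.
  by have [-> // | ?] := eqVneq x s0.-1; apply/ltnW/valley_fall; lia.
by have := fall_across_min ltac:(lia) ltac:(lia); lia.
Qed.

Lemma valley_no_two_rises w x y z : w < x < y -> y < z < n ->
  letter pi z < letter pi y -> letter pi w < letter pi y -> letter pi x < letter pi y -> False.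
Proof.
move=> /andP[lt_wx lt_xy] lt_yzn lt_lzy lt_lwy lt_lxy.
have lt_ye : y < e by apply: (valley_inversion (z := z)).
have eq_ws0 : w = s0 by apply: (valley_rise_from_min (y := y)); lia.
have eq_xs0 : x = s0 by apply: (valley_rise_from_min (y := y)); lia.
lia.
Qed.

Lemma valley_avoids :
  avoids pi [:: 1; 2; 4; 3] /\ avoids pi [:: 2; 1; 4; 3] /\ avoids pi [:: 2; 3; 1].
Proof.
split; [|split].
- move=> /contains1243P [w [x [y [z [lt_wxy lt_yzn lt_lwx /andP[lt_lxz lt_lzy]]]]]].
  by apply: (valley_no_two_rises lt_wxy lt_yzn); lia.
- move=> /contains2143P [w [x [y [z [lt_wxy lt_yzn lt_lxw /andP[lt_lwz lt_lzy]]]]]].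
  by apply: (valley_no_two_rises lt_wxy lt_yzn); lia.
- move=> /contains231P [x [y [z [/andP[lt_xy lt_yz] lt_z_n /andP[lt_lzx lt_lxy]]]]].
  have lt_ye : y < e by apply: (valley_inversion (z := z)); lia.
  have eq_xs0 : x = s0 by apply: (valley_rise_from_min (y := y)); lia.
  by have := letter_gt0 pi lt_z_n; rewrite eq_xs0 letter_s0 in lt_lzx; lia.
Qed.

End ValleyShape.

Lemma avoids_valley_shapeP :
  avoids pi [:: 1; 2; 4; 3] /\ avoids pi [:: 2; 1; 4; 3] /\ avoids pi [:: 2; 3; 1] <->
  exists e, valley_shape pi s0 e.
Proof.
split=> [[av1243 [av2143 av231]] | [e [lt_s0e descentE fall]]].
  exact: avoid_valley_shape.
exact: (valley_avoids lt_s0e descentE fall).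
Qed.

Lemma valley_shape_descentsP :
  (exists e, valley_shape pi s0 e) <->
  ((size (descents pi) < s0.+1 /\ descents pi =i iota 1 (size (descents pi)))
   \/
   (s0.+1 <= size (descents pi) /\
    descents pi =i [seq i <- iota 1 (size (descents pi)).+1 | i != s0.+1] /\
    (1 < s0.+1 < n -> oneline pi s0.+2 < oneline pi s0.+1.-1))).
Proof.
split=> [[e [lt_s0e /descentsP eqD fall]] | [[lt_ds1 eqD] | [le_s1d [eqD fall]]]].
- have sizeD : size (descents pi) = e.-1 by apply: size_descents eqD; lia.
  case: (ltngtP e s0.+1) => [| lt_s1e | eq_e]; first by lia.
    right; rewrite sizeD prednK; last by lia.
    split; [lia | split=> // /andP[s0_gt0 _]].
    have -> : s0.+1.-1 = s0.-1.+1 by lia.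
    exact: fall.
  left; rewrite sizeD eq_e; split=> // j.
  by rewrite eqD mem_filter !mem_iota; lia.
- have eq_ds0 : size (descents pi) = s0.
    apply/eqP; rewrite eqn_leq -ltnS lt_ds1 /= leqNgt; apply/negP => lt_ds0.
    have := descent_pred_min ltac:(lia); rewrite -mem_descents prednK ?eqD ?mem_iota; lia.
  exists s0.+1; split=> //; last by lia.
  by apply/descentsP => j; rewrite eqD eq_ds0 mem_filter !mem_iota; lia.
- exists (size (descents pi)).+1; split=> [|| lt_s1e s0_gt0]; first by lia.
    by apply/descentsP.
  have : (size (descents pi)).+1 \in descents pi by rewrite eqD mem_filter mem_iota; lia.
  rewrite mem_descents => /andP[lt_d1_n _].
  have := fall ltac:(lia); have -> : s0.+1.-1 = s0.-1.+1 by lia.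
  exact.
Qed.

End Valley.

Theorem corollary3p13 (n : nat) (pi : 'S_n) (s : nat)
  (hs : 1 <= s <= n) (hs1 : oneline pi s = 1) :
  let D := descents pi in
  let d := size D in
  (avoids pi [:: 1; 2; 4; 3] /\ avoids pi [:: 2; 1; 4; 3] /\ avoids pi [:: 2; 3; 1])
  <->
  ((d < s /\ D =i iota 1 d)
   \/
   (s <= d /\ D =i [seq i <- iota 1 d.+1 | i != s] /\
    (1 < s < n -> oneline pi s.+1 < oneline pi s.-1))).
Proof.
case: s hs hs1 => [|s0] // /andP[_ lt_s0_n] letter_s0 D d.
exact: iff_trans (avoids_valley_shapeP lt_s0_n letter_s0)
                 (valley_shape_descentsP lt_s0_n letter_s0).
Qed.
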